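(* Let $F(x)$ be a quantifier-free formula such that $x\in\mathrm{RV}(F(x))$, and let $\mathbf c$ be a nonempty finite set of object constants containing every object constant occurring in $F(x)$. Then the formula $F(x)\rightarrow\mathit{in}_{\mathbf c}(x)$ is derivable from $\mathit{SPP}_{\mathbf c}$ in $\mathbf{INT}^=$.
   Context: Formulas are first-order formulas with object constants, predicate constants and equality, but no function constants of arity $>0$; primitive connectives $\bot,\land,\lor,\rightarrow$. Restricted variables: for quantifier-free $G$, $\mathrm{RV}(G)$ is: $\emptyset$ if $G$ is an equality between two variables; the set of variables of $G$ if $G$ is any other atomic formula; $\mathrm{RV}(\bot)=\emptyset$; $\mathrm{RV}(G\land H)=\mathrm{RV}(G)\cup\mathrm{RV}(H)$; $\mathrm{RV}(G\lor H)=\mathrm{RV}(G)\cap\mathrm{RV}(H)$; $\mathrm{RV}(G\rightarrow H)=\emptyset$. For a finite set $\mathbf c$ of object constants, $\mathit{in}_{\mathbf c}(x_1,\dots,x_m)$ is $\bigwedge_{1\le j\le m}\bigvee_{c\in\mathbf c}x_j=c$, and $\mathit{SPP}_{\mathbf c}$ is the conjunction of the sentences $\forall\mathbf x(p_i(\mathbf x)\rightarrow\mathit{in}_{\mathbf c}(\mathbf x))$ over all predicate constants $p_i$ occurring in $F(x)$ ($\mathbf x$ distinct variables of the arity of $p_i$). $\mathbf{INT}^=$ is intuitionistic predicate logic with equality. *)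

(* Deep embedding of first-order logic with equality,
   object constants, predicate constants, no function symbols;
   de Bruijn indices for variables; natural deduction for INT^=. *)
From Stdlib Require Import List Arith.
Import ListNotations.

Inductive term : Type :=
| var : nat -> term
| cst : nat -> term.

(* Formulas. Predicate constants are named by nat; their arity is given
   by a signature [ar : nat -> nat]. *)
Inductive form : Type :=
| Bot : form
| Atom : nat -> list term -> form
| Eq : term -> term -> form
| And : form -> form -> form
| Or : form -> form -> form
| Imp : form -> form -> form
| All : form -> form
| Ex : form -> form.

Definition subst_term (s : nat -> term) (t : term) : term :=
  match t with var n => s n | cst c => cst c end.

Definition shift : nat -> term := fun n => var (S n).

Definition up (s : nat -> term) : nat -> term :=
  fun n => match n with 0 => var 0 | S m => subst_term shift (s m) end.

Fixpoint subst (s : nat -> term) (f : form) : form :=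
  match f with
  | Bot => Bot
  | Atom p ts => Atom p (map (subst_term s) ts)
  | Eq t1 t2 => Eq (subst_term s t1) (subst_term s t2)
  | And a b => And (subst s a) (subst s b)
  | Or a b => Or (subst s a) (subst s b)
  | Imp a b => Imp (subst s a) (subst s b)
  | All a => All (subst (up s) a)
  | Ex a => Ex (subst (up s) a)
  end.

Definition inst (t : term) : nat -> term :=
  fun n => match n with 0 => t | S m => var m end.

Inductive prv : list form -> form -> Prop :=
| Ctx G a : In a G -> prv G a
| BotE G a : prv G Bot -> prv G a
| AndI G a b : prv G a -> prv G b -> prv G (And a b)
| AndE1 G a b : prv G (And a b) -> prv G a
| AndE2 G a b : prv G (And a b) -> prv G b
| OrI1 G a b : prv G a -> prv G (Or a b)
| OrI2 G a b : prv G b -> prv G (Or a b)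
| OrE G a b c : prv G (Or a b) -> prv (a :: G) c -> prv (b :: G) c -> prv G c
| ImpI G a b : prv (a :: G) b -> prv G (Imp a b)
| ImpE G a b : prv G (Imp a b) -> prv G a -> prv G b
| AllI G a : prv (map (subst shift) G) a -> prv G (All a)
| AllE G a t : prv G (All a) -> prv G (subst (inst t) a)
| ExI G a t : prv G (subst (inst t) a) -> prv G (Ex a)
| ExE G a b : prv G (Ex a) -> prv (a :: map (subst shift) G) (subst shift b) -> prv G b
| EqRefl G t : prv G (Eq t t)
| EqSub G a s t : prv G (Eq s t) -> prv G (subst (inst s) a) -> prv G (subst (inst t) a).

Definition Top : form := Imp Bot Bot.

Fixpoint bigand (l : list form) : form :=
  match l with [] => Top | [a] => a | a :: l' => And a (bigand l') end.

Fixpoint bigor (l : list form) : form :=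
  match l with [] => Bot | [a] => a | a :: l' => Or a (bigor l') end.

Fixpoint qfree (f : form) : Prop :=
  match f with
  | Bot | Atom _ _ | Eq _ _ => True
  | And a b | Or a b | Imp a b => qfree a /\ qfree b
  | All _ | Ex _ => False
  end.

Definition term_vars (t : term) : list nat :=
  match t with var n => [n] | cst _ => [] end.

Fixpoint inRV (x : nat) (f : form) : Prop :=
  match f with
  | Eq (var _) (var _) => False
  | Eq s t => In x (term_vars s ++ term_vars t)
  | Atom _ ts => In (var x) ts
  | Bot => False
  | And a b => inRV x a \/ inRV x b
  | Or a b => inRV x a /\ inRV x b
  | Imp _ _ => False
  | All _ | Ex _ => False
  end.

Definition term_consts (t : term) : list nat :=
  match t with var _ => [] | cst c => [c] end.

Fixpoint consts (f : form) : list nat :=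
  match f with
  | Bot => []
  | Atom _ ts => flat_map term_consts ts
  | Eq s t => term_consts s ++ term_consts t
  | And a b | Or a b | Imp a b => consts a ++ consts b
  | All a | Ex a => consts a
  end.

Fixpoint preds (f : form) : list nat :=
  match f with
  | Bot | Eq _ _ => []
  | Atom p _ => [p]
  | And a b | Or a b | Imp a b => preds a ++ preds b
  | All a | Ex a => preds a
  end.

Fixpoint wf (ar : nat -> nat) (f : form) : Prop :=
  match f with
  | Bot | Eq _ _ => True
  | Atom p ts => length ts = ar p
  | And a b | Or a b | Imp a b => wf ar a /\ wf ar b
  | All a | Ex a => wf ar a
  end.

Definition in_c (cs : list nat) (xs : list term) : form :=
  bigand (map (fun x => bigor (map (fun c => Eq x (cst c)) cs)) xs).

Fixpoint alls (m : nat) (f : form) : form :=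
  match m with 0 => f | S k => All (alls k f) end.

Definition spp_ax (ar : nat -> nat) (cs : list nat) (p : nat) : form :=
  let xs := map var (seq 0 (ar p)) in
  alls (ar p) (Imp (Atom p xs) (in_c cs xs)).

Definition SPP (ar : nat -> nat) (cs : list nat) (F : form) : form :=
  bigand (map (spp_ax ar cs) (nodup Nat.eq_dec (preds F))).

(* If x occurs in an atom p(t), the SPP axiom for p yields in_c(t), whose
   conjunct for x is in_c(x).  An equation between x and a constant of F is
   (up to symmetry) a disjunct of in_c(x), since the constants of F lie in c.  For a
   conjunction one conjunct restricts x; for a disjunction both do, so
   or-elimination applies.  The induction is carried out over an arbitrary
   context containing SPP_c, because or-elimination extends the context. *)
From Stdlib Require Import List Arith Lia.
Import ListNotations.

Lemma subst_ext s r f : (forall n, s n = r n) -> subst s f = subst r f.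
Proof.
  revert s r; induction f; intros s r H; simpl; try reflexivity;
    try (f_equal; auto; fail).
  - f_equal. apply map_ext. intros [|]; simpl; auto.
  - destruct t, t0; simpl; rewrite ?H; reflexivity.
  - f_equal. apply IHf. intros [|n]; simpl; rewrite ?H; reflexivity.
  - f_equal. apply IHf. intros [|n]; simpl; rewrite ?H; reflexivity.
Qed.

Lemma subst_id f : subst var f = f.
Proof.
  induction f; simpl; try (f_equal; auto; fail).
  - f_equal. rewrite <- (map_id l) at 2. apply map_ext. intros [|]; reflexivity.
  - destruct t, t0; reflexivity.
  - f_equal. rewrite <- IHf at 2. apply subst_ext. intros [|]; reflexivity.
  - f_equal. rewrite <- IHf at 2. apply subst_ext. intros [|]; reflexivity.
Qed.

Lemma subst_term_comp s r t :
  subst_term s (subst_term r t) = subst_term (fun n => subst_term s (r n)) t.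
Proof. destruct t; reflexivity. Qed.

Lemma subst_comp f : forall s r,
  subst s (subst r f) = subst (fun n => subst_term s (r n)) f.
Proof.
  induction f; intros s r; simpl; try reflexivity; try (f_equal; auto; fail).
  - f_equal. rewrite map_map. apply map_ext. intros; apply subst_term_comp.
  - f_equal; apply subst_term_comp.
  - f_equal. rewrite IHf. apply subst_ext.
    intros [|n]; simpl; [reflexivity|]. destruct (r n); reflexivity.
  - f_equal. rewrite IHf. apply subst_ext.
    intros [|n]; simpl; [reflexivity|]. destruct (r n); reflexivity.
Qed.

Lemma subst_bigand s l : subst s (bigand l) = bigand (map (subst s) l).
Proof.
  induction l as [|a l IH]; [reflexivity|].
  destruct l; [reflexivity|]. simpl in *. rewrite IH. reflexivity.
Qed.

Lemma subst_bigor s l : subst s (bigor l) = bigor (map (subst s) l).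
Proof.
  induction l as [|a l IH]; [reflexivity|].
  destruct l; [reflexivity|]. simpl in *. rewrite IH. reflexivity.
Qed.

Lemma subst_in_c s cs ts : subst s (in_c cs ts) = in_c cs (map (subst_term s) ts).
Proof.
  unfold in_c. rewrite subst_bigand, !map_map. f_equal.
  apply map_ext. intros t. rewrite subst_bigor, map_map. reflexivity.
Qed.

Lemma alls_S m f : alls (S m) f = alls m (All f).
Proof. induction m; simpl in *; [reflexivity|]. rewrite IHm; reflexivity. Qed.

(* Each variable [n < m] bound by the [m] quantifiers becomes [sg n]; the
   remaining free variables of [f] are shifted down by [m]. *)
Lemma prv_alls_elim m : forall G f sg, prv G (alls m f) ->
  prv G (subst (fun n => if n <? m then sg n else var (n - m)) f).
Proof.
  induction m; intros G f sg H.
  - erewrite subst_ext, subst_id; [exact H|].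
    intros n; simpl; f_equal; lia.
  - rewrite alls_S in H.
    specialize (IHm _ _ (fun n => sg (S n)) H). simpl in IHm.
    apply (AllE _ _ (sg 0)) in IHm. rewrite subst_comp in IHm.
    erewrite subst_ext; [exact IHm|].
    intros [|n]; [reflexivity|]. cbn [subst_term up inst].
    change (S n <? S m) with (n <? m).
    destruct (n <? m); [destruct (sg (S n)); reflexivity|reflexivity].
Qed.

Lemma prv_bigand_elim G l a : In a l -> prv G (bigand l) -> prv G a.
Proof.
  induction l as [|b l IH]; intros Hin H; [destruct Hin|].
  destruct l as [|c l].
  - destruct Hin as [<-|[]]; exact H.
  - destruct Hin as [<-|Hin].
    + exact (AndE1 _ _ _ H).
    + exact (IH Hin (AndE2 _ _ _ H)).
Qed.

Lemma prv_bigor_intro G l a : In a l -> prv G a -> prv G (bigor l).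
Proof.
  induction l as [|b l IH]; intros Hin H; [destruct Hin|].
  destruct l as [|c l].
  - destruct Hin as [<-|[]]; exact H.
  - destruct Hin as [<-|Hin].
    + exact (OrI1 _ _ _ H).
    + exact (OrI2 _ _ _ (IH Hin H)).
Qed.

Lemma prv_eq_sym G s t : prv G (Eq s t) -> prv G (Eq t s).
Proof.
  intros H. destruct s as [n|c].
  - exact (EqSub G (Eq (var 0) (var (S n))) _ t H (EqRefl G _)).
  - exact (EqSub G (Eq (var 0) (cst c)) _ t H (EqRefl G _)).
Qed.

Lemma prv_in_c_elim G cs ts t : In t ts -> prv G (in_c cs ts) -> prv G (in_c cs [t]).
Proof.
  intros Hin H. apply (prv_bigand_elim _ _ _ (in_map _ _ _ Hin) H).
Qed.

Lemma prv_in_c_intro G cs t c : In c cs -> prv G (Eq t (cst c)) -> prv G (in_c cs [t]).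
Proof.
  intros Hc H. apply (prv_bigor_intro _ _ _ (in_map (fun c => Eq t (cst c)) _ _ Hc) H).
Qed.

Lemma map_nth_seq_length (ts : list term) d :
  map (fun n => nth n ts d) (seq 0 (length ts)) = ts.
Proof.
  induction ts as [|t ts IH]; [reflexivity|].
  simpl. rewrite <- seq_shift, map_map. simpl. f_equal. exact IH.
Qed.

Lemma prv_spp_ax_atom G ar cs p ts :
  length ts = ar p -> prv G (spp_ax ar cs p) -> prv G (Atom p ts) ->
  prv G (in_c cs ts).
Proof.
  intros Hlen Hspp Hatom. unfold spp_ax in Hspp.
  apply (prv_alls_elim _ _ _ (fun n => nth n ts (var 0))) in Hspp.
  simpl in Hspp. rewrite subst_in_c, map_map in Hspp.
  enough (Hts : map (fun n => subst_term
                  (fun n => if n <? ar p then nth n ts (var 0) else var (n - ar p))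
                  (var n)) (seq 0 (ar p)) = ts)
    by (rewrite Hts in Hspp; exact (ImpE _ _ _ Hspp Hatom)).
  rewrite <- Hlen. transitivity (map (fun n => nth n ts (var 0)) (seq 0 (length ts))).
  - apply map_ext_in. intros n Hn. apply in_seq in Hn.
    simpl. destruct (Nat.ltb_spec n (length ts)); [reflexivity|lia].
  - apply map_nth_seq_length.
Qed.

Lemma prv_SPP_spp_ax G ar cs F p :
  In p (preds F) -> In (SPP ar cs F) G -> prv G (spp_ax ar cs p).
Proof.
  intros Hp HG. apply (prv_bigand_elim _ (map (spp_ax ar cs) (nodup Nat.eq_dec (preds F)))).
  - apply in_map, nodup_In, Hp.
  - exact (Ctx _ _ HG).
Qed.

Lemma prv_eq_rv_in_c G cs x s t :
  inRV x (Eq s t) -> incl (consts (Eq s t)) cs -> prv G (Eq s t) ->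
  prv G (in_c cs [var x]).
Proof.
  intros Hrv Hc H.
  destruct s as [y|c], t as [z|d]; simpl in Hrv, Hc; try tauto;
    destruct Hrv as [<-|[]].
  - exact (prv_in_c_intro _ _ _ _ (Hc d (or_introl eq_refl)) H).
  - exact (prv_in_c_intro _ _ _ _ (Hc c (or_introl eq_refl)) (prv_eq_sym _ _ _ H)).
Qed.

Lemma prv_rv_in_c ar cs F0 x F : forall G,
  wf ar F -> qfree F -> inRV x F -> incl (consts F) cs -> incl (preds F) (preds F0) ->
  In (SPP ar cs F0) G -> prv G F -> prv G (in_c cs [var x]).
Proof.
  induction F; intros G Hwf Hq Hrv Hc Hp HG HF; simpl in *; try tauto.
  - apply (prv_in_c_elim _ _ l); [exact Hrv|].
    apply (prv_spp_ax_atom _ ar _ n); [exact Hwf| |exact HF].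
    exact (prv_SPP_spp_ax _ _ _ _ _ (Hp n (or_introl eq_refl)) HG).
  - exact (prv_eq_rv_in_c _ _ _ _ _ Hrv Hc HF).
  - apply incl_app_inv in Hc as [Hc1 Hc2]. apply incl_app_inv in Hp as [Hp1 Hp2].
    destruct Hwf, Hq, Hrv as [Hrv|Hrv].
    + apply (IHF1 G); auto. exact (AndE1 _ _ _ HF).
    + apply (IHF2 G); auto. exact (AndE2 _ _ _ HF).
  - apply incl_app_inv in Hc as [Hc1 Hc2]. apply incl_app_inv in Hp as [Hp1 Hp2].
    destruct Hwf, Hq, Hrv as [Hrv1 Hrv2].
    apply (OrE _ _ _ _ HF).
    + apply (IHF1 (F1 :: G)); simpl; auto. apply Ctx; simpl; auto.
    + apply (IHF2 (F2 :: G)); simpl; auto. apply Ctx; simpl; auto.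
Qed.

Theorem lemma6 (ar : nat -> nat) (F : form) (x : nat) (cs : list nat) :
  wf ar F ->
  qfree F ->
  inRV x F ->
  cs <> [] ->
  (forall c, In c (consts F) -> In c cs) ->
  prv [SPP ar cs F] (Imp F (in_c cs [var x])).
Proof.
  intros Hwf Hq Hrv _ Hc. apply ImpI.
  apply (prv_rv_in_c ar cs F x F); auto.
  - apply incl_refl.
  - simpl; auto.
  - apply Ctx; simpl; auto.
Qed.
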